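(* For $a\in\mathbb{R}$ define $\mathcal{L}_a:\mathcal{M}_2\to\mathcal{M}_2$ by $$\mathcal{L}_a(X)=(\operatorname{Tr}X)\,\mathbb{1}-a\,\Delta(X)-(2-a)X,\qquad \Delta(X)=P_0XP_0+P_1XP_1,$$ where $P_0=|0\rangle\langle 0|$, $P_1=|1\rangle\langle 1|$ for the standard basis $\{|0\rangle,|1\rangle\}$ of $\mathbb{C}^2$. Then $e^{t\mathcal{L}_a}$ is a unital Schwarz map for every $t\ge 0$ if and only if $a\le 3/2$.
   Context: A unital Schwarz map on $\mathcal{M}_n$ is a linear map $\Phi$ with $\Phi(\mathbb{1})=\mathbb{1}$ and $\Phi(X^\dagger X)\ge\Phi(X)^\dagger\Phi(X)$ for all $X\in\mathcal{M}_n$. Note $\mathcal{L}_a$ is self-dual with respect to the Hilbert–Schmidt inner product and $\mathcal{L}_a(\mathbb{1})=0$. *)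

From HB Require Import structures.
From mathcomp Require Import all_boot all_order all_algebra.
From mathcomp Require Import all_classical all_reals all_analysis.
From mathcomp Require Import complex.
Set Implicit Arguments. Unset Strict Implicit. Unset Printing Implicit Defensive.
Import Order.TTheory GRing.Theory Num.Theory.
Import numFieldNormedType.Exports.
Local Open Scope ring_scope.

Section Defs.
Variable R : realType.
Local Notation C := R[i].

Definition rC (x : R) : C := Complex x 0.

Definition adj (m n : nat) (X : 'M[C]_(m, n)) : 'M[C]_(n, m) := (map_mx (@Num.conj C) X)^T.

(* positive semidefinite: <v, A v> is a nonnegative real for all v *)
Definition psd (A : 'M[C]_2) : Prop :=
  forall v : 'cV[C]_2, 0 <= (adj v *m A *m v) 0 0.

Definition loewner_ge (A B : 'M[C]_2) : Prop := psd (A - B).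

Definition P0 : 'M[C]_2 := delta_mx 0 0.
Definition P1 : 'M[C]_2 := delta_mx 1 1.

Definition Delta (X : 'M[C]_2) : 'M[C]_2 := P0 *m X *m P0 + P1 *m X *m P1.

Definition La (a : R) (X : 'M[C]_2) : 'M[C]_2 :=
  (\tr X)%:M - rC a *: Delta X - rC (2 - a) *: X.

Definition expLa_partial (a t : R) (X : 'M[C]_2) (N : nat) : 'M[C]_2 :=
  \sum_(k < N) rC (t ^+ k / (k`!)%:R) *: iter k (La a) X.

Definition expLa (a t : R) (X : 'M[C]_2) : 'M[C]_2 :=
  \matrix_(i, j)
    Complex (limn (fun N => @complex.Re R (expLa_partial a t X N i j)))
            (limn (fun N => @complex.Im R (expLa_partial a t X N i j))).

Definition unital_schwarz (Phi : 'M[C]_2 -> 'M[C]_2) : Prop :=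
  [/\ (forall (c : C) (X Y : 'M[C]_2), Phi (c *: X + Y) = c *: Phi X + Phi Y),
      Phi 1%:M = 1%:M
    & forall X : 'M[C]_2, loewner_ge (Phi (adj X *m X)) (adj (Phi X) *m Phi X)].

End Defs.

From mathcomp Require Import all_boot all_order all_algebra.
From mathcomp Require Import all_classical all_reals all_analysis.
From mathcomp Require Import complex.
From mathcomp Require Import ring lra.

Set Implicit Arguments.
Unset Strict Implicit.
Unset Printing Implicit Defensive.

Import Order.TTheory GRing.Theory Num.Theory.
Import numFieldNormedType.Exports.
Local Open Scope classical_set_scope.
Local Open Scope ring_scope.

(** The generator [L_a] maps the diagonal entries [(x, w)] to [(w - x, x - w)]
   and multiplies the off-diagonal entries by [a - 2], so [e^{tL_a}] is the
   phase-covariant map that sends [(x, w)] to [(s x + (1 - s) w, (1 - s) x + s w)]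
   and multiplies the off-diagonal entries by [q], where
   [s = (1 + e^{-2t})/2] and [q = e^{t(a - 2)}].  For [s <= 1] such a map is a
   unital Schwarz map exactly when [q^2 <= s]: the Schwarz defect is an
   explicit nonnegative combination of squared moduli with coefficients
   [s - q^2] and [1 - s].  Finally, [e^{2t(a-2)} <= (1 + e^{-2t})/2] holds for
   all [t >= 0] exactly when the slope [2(a - 2)] of the left side at [t = 0]
   is at most the slope [-1] of the right side. *)

Section PhaseCovariantMaps.
Variable R : realType.
Local Notation C := R[i].
Local Notation "x ^*" := (Num.conj x).

Lemma rCE : @rC R = real_complex R.
Proof. by []. Qed.

Lemma conj_rC (x : R) : (rC x)^* = rC x.
Proof. by apply: conj_Creal; rewrite rCE complex_real. Qed.

Lemma mx2_eq (A B : 'M[C]_2) :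
  A 0 0 = B 0 0 -> A 0 1 = B 0 1 -> A 1 0 = B 1 0 -> A 1 1 = B 1 1 -> A = B.
Proof.
move=> e00 e01 e10 e11; apply/matrixP => i j.
have ord2 (k : 'I_2) : k = 0 \/ k = 1.
  by case: k => [[|[|//]] hk]; [left | right]; apply: val_inj.
by case: (ord2 i) => ->; case: (ord2 j) => ->.
Qed.

Lemma big_ord2 (V : nmodType) (f : 'I_2 -> V) : \sum_(i < 2) f i = f 0 + f 1.
Proof.
rewrite big_ord_recr big_ord_recr big_ord0 /= add0r.
by congr (f _ + f _); apply: val_inj.
Qed.

Definition pcmap (u v q : R) (X : 'M[C]_2) : 'M[C]_2 :=
  \matrix_(i, j)
    if i == j then
      if i == 0 then rC u * X 0 0 + rC v * X 1 1 else rC v * X 0 0 + rC u * X 1 1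
    else rC q * X i j.

Lemma pcmap_id (X : 'M[C]_2) : pcmap 1 0 1 X = X.
Proof. by apply: mx2_eq; rewrite !mxE /= rCE ?rmorph0 ?rmorph1; ring. Qed.

Lemma pcmap0 (X : 'M[C]_2) : pcmap 0 0 0 X = 0.
Proof. by apply: mx2_eq; rewrite !mxE /= rCE ?rmorph0; ring. Qed.

Lemma pcmapD (u v q u' v' q' : R) (X : 'M[C]_2) :
  pcmap u v q X + pcmap u' v' q' X = pcmap (u + u') (v + v') (q + q') X.
Proof. by apply: mx2_eq; rewrite !mxE /= rCE ?rmorphD; ring. Qed.

Lemma pcmapZ (c u v q : R) (X : 'M[C]_2) :
  rC c *: pcmap u v q X = pcmap (c * u) (c * v) (c * q) X.
Proof. by apply: mx2_eq; rewrite !mxE /= rCE ?rmorphM; ring. Qed.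

Lemma pcmap_is_linear (u v q : R) (c : C) (X Y : 'M[C]_2) :
  pcmap u v q (c *: X + Y) = c *: pcmap u v q X + pcmap u v q Y.
Proof. by apply: mx2_eq; rewrite !mxE /=; ring. Qed.

Lemma sum_pcmap (w u v q : nat -> R) (X : 'M[C]_2) (N : nat) :
  \sum_(k < N) rC (w k) *: pcmap (u k) (v k) (q k) X =
  pcmap (\sum_(k < N) w k * u k) (\sum_(k < N) w k * v k)
        (\sum_(k < N) w k * q k) X.
Proof.
elim: N => [|N IH]; first by rewrite !big_ord0 pcmap0.
by rewrite !big_ord_recr /= IH pcmapZ pcmapD.
Qed.

Lemma pcmap_comp (u v q u' v' q' : R) (X : 'M[C]_2) :
  pcmap u v q (pcmap u' v' q' X) =
  pcmap (u * u' + v * v') (u * v' + v * u') (q * q') X.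
Proof. by apply: mx2_eq; rewrite !mxE /= rCE ?rmorphD ?rmorphM; ring. Qed.

Lemma La_pcmap (a : R) (X : 'M[C]_2) : La a X = pcmap (-1) 1 (a - 2) X.
Proof.
apply: mx2_eq; rewrite /La /Delta /P0 /P1 !mxE /mxtrace !big_ord2 !mxE.
all: rewrite !big_ord2 !mxE /= rCE ?rmorphN ?rmorph1 ?rmorphB ?rmorph_nat; ring.
Qed.

(* The diagonal block of [L_a] has eigenvalues [0] (on [x + w]) and [-2]
   (on [x - w]); [0 ^+ k] is [1] for [k = 0] and [0] otherwise. *)
Definition diag_coef0 (k : nat) : R := (0 ^+ k + (-2) ^+ k) / 2.
Definition diag_coef1 (k : nat) : R := (0 ^+ k - (-2) ^+ k) / 2.

Lemma iter_La (a : R) (X : 'M[C]_2) (k : nat) :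
  iter k (La a) X = pcmap (diag_coef0 k) (diag_coef1 k) ((a - 2) ^+ k) X.
Proof.
elim: k => [|k IH].
  rewrite -[LHS]pcmap_id /diag_coef0 /diag_coef1 !expr0.
  by congr pcmap; field.
rewrite iterS IH La_pcmap pcmap_comp exprS /diag_coef0 /diag_coef1 !exprS mul0r.
by congr pcmap; field.
Qed.

Definition exp_partial (t : R) (h : nat -> R) (N : nat) : R :=
  \sum_(k < N) t ^+ k / k`!%:R * h k.

Lemma expLa_partialE (a t : R) (X : 'M[C]_2) (N : nat) :
  expLa_partial a t X N =
  pcmap (exp_partial t diag_coef0 N) (exp_partial t diag_coef1 N)
        (exp_partial t (fun k => (a - 2) ^+ k) N) X.
Proof.
rewrite /expLa_partial; under eq_bigr do rewrite iter_La.
exact: (sum_pcmap (fun k => t ^+ k / k`!%:R)).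
Qed.

Lemma cvg_exp_partial (t x : R) :
  exp_partial t (fun k => x ^+ k) N @[N --> \oo] --> expR (t * x).
Proof.
have -> : exp_partial t (fun k => x ^+ k) = series (exp_coeff (t * x)).
  apply: funext => N; rewrite /series /= big_mkord; apply: eq_bigr => k _.
  by rewrite /exp_coeff /= exprMn; field.
exact: is_cvg_series_exp_coeff.
Qed.

Lemma cvg_exp_partial_comb (t x y c d l : R) (h : nat -> R) :
  (forall k, h k = c * x ^+ k + d * y ^+ k) ->
  l = c * expR (t * x) + d * expR (t * y) ->
  exp_partial t h N @[N --> \oo] --> l.
Proof.
move=> hE ->; have -> : exp_partial t h =
  (fun N => c * exp_partial t (fun k => x ^+ k) N +
            d * exp_partial t (fun k => y ^+ k) N).
  apply: funext => N; rewrite /exp_partial !mulr_sumr -big_split /=.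
  by apply: eq_bigr => k _; rewrite hE; ring.
by apply: cvgD; apply: cvgMl_tmp; apply: cvg_exp_partial.
Qed.

Definition climn (f : nat -> C) : C :=
  Complex (limn (fun N => complex.Re (f N))) (limn (fun N => complex.Im (f N))).

Lemma climn_comb (f : nat -> C) (u v : nat -> R) (U V : R) (p r : C) :
  (forall N, f N = rC (u N) * p + rC (v N) * r) ->
  u n @[n --> \oo] --> U -> v n @[n --> \oo] --> V ->
  climn f = rC U * p + rC V * r.
Proof.
move=> /funext -> uU vV.
have lim_comb (x y : R) : limn (fun N => u N * x + v N * y) = U * x + V * y.
  by apply: cvg_lim; [exact: Rhausdorff | apply: cvgD; apply: cvgMr_tmp].
case: p => p1 p2; case: r => r1 r2; rewrite /climn /=.
under eq_fun do rewrite !mul0r !subr0.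
under [X in Complex _ (limn X)]eq_fun do rewrite !mul0r !addr0.
by rewrite !lim_comb; congr Complex; ring.
Qed.

Lemma climn_pcmap (u v q : nat -> R) (U V Q : R) (X : 'M[C]_2) :
  u n @[n --> \oo] --> U -> v n @[n --> \oo] --> V -> q n @[n --> \oo] --> Q ->
  \matrix_(i, j) climn (fun N => pcmap (u N) (v N) (q N) X i j) = pcmap U V Q X.
Proof.
move=> uU vV qQ; apply: mx2_eq; rewrite !mxE /=.
- by apply: climn_comb uU vV => N; rewrite mxE.
- rewrite -[RHS]addr0 -(mulr0 (rC Q)).
  by apply: (climn_comb _ qQ qQ) => N; rewrite mxE /= mulr0 addr0.
- rewrite -[RHS]addr0 -(mulr0 (rC Q)).
  by apply: (climn_comb _ qQ qQ) => N; rewrite mxE /= mulr0 addr0.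
- by apply: climn_comb vV uU => N; rewrite mxE.
Qed.

Lemma expLa_pcmap (a t : R) :
  expLa a t = pcmap ((1 + expR (t * -2)) / 2) (1 - (1 + expR (t * -2)) / 2)
                    (expR (t * (a - 2))).
Proof.
apply: funext => X; rewrite /expLa.
rewrite (funext (expLa_partialE a t X)) /=.
apply: climn_pcmap; last exact: cvg_exp_partial.
- apply: (@cvg_exp_partial_comb t 0 (-2) (1 / 2) (1 / 2)).
    by move=> k; rewrite /diag_coef0; field.
  by rewrite mulr0 expR0; field.
- apply: (@cvg_exp_partial_comb t 0 (-2) (1 / 2) (- (1 / 2))).
    by move=> k; rewrite /diag_coef1; field.
  by rewrite mulr0 expR0; field.
Qed.

(* A sum-of-squares certificate: for [q^2 <= s <= 1] every coefficient is
   nonnegative, and with [X = E01], [v = e1] only the first term survives. *)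
Lemma pcmap_schwarz_defect (s q : R) (X : 'M[C]_2) (v : 'cV[C]_2) :
  let Phi := pcmap s (1 - s) q in
  let d := X 0 0 - X 1 1 in
  (adj v *m (Phi (adj X *m X) - adj (Phi X) *m Phi X) *m v) 0 0 =
  rC (s - q ^+ 2) * (`|X 1 0 * v 0 0| ^+ 2 + `|X 0 1 * v 1 0| ^+ 2)
  + rC ((1 - s) * (s - q ^+ 2)) * (`|d * v 0 0| ^+ 2 + `|d * v 1 0| ^+ 2)
  + rC (1 - s) * `|(X 0 1)^* * v 0 0 + rC q * d^* * v 1 0| ^+ 2
  + rC (1 - s) * `|rC q * d^* * v 0 0 - (X 1 0)^* * v 1 0| ^+ 2.
Proof.
rewrite /adj !normCK !(mxE, big_ord2) /=.
rewrite !(rmorphD, rmorphB, rmorphN, rmorphM) /= !(conjCK, conj_rC).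
by rewrite rCE !(rmorphB, rmorphM, rmorphXn, rmorph1) /=; ring.
Qed.

Lemma pcmap_unital_schwarz (s q : R) :
  s <= 1 -> unital_schwarz (pcmap s (1 - s) q) <-> q ^+ 2 <= s.
Proof.
move=> s_le1; rewrite -subr_ge0 -ler0c -rCE; split.
  case=> _ _ /(_ (delta_mx 0 1)) /(_ (delta_mx 1 0)).
  rewrite pcmap_schwarz_defect !mxE /=.
  by rewrite !(expr2, mul0r, mulr0, mulr1, subrr, oppr0, rmorph0, normr0, normr1, addr0, add0r).
move=> sq_le_s; split.
- exact: pcmap_is_linear.
- by apply: mx2_eq; rewrite !mxE /= rCE ?rmorphB ?rmorph1 ?rmorph0; ring.
move=> X v; rewrite pcmap_schwarz_defect /=.
have s'_ge0 : 0 <= rC (1 - s) by rewrite rCE ler0c subr_ge0.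
by rewrite !addr_ge0 // !mulr_ge0 ?addr_ge0 // rCE rmorphM mulr_ge0 // -rCE.
Qed.

End PhaseCovariantMaps.

Lemma coherence_bound_iff (R : realType) (a : R) :
  (forall t : R, 0 <= t -> expR (t * (a - 2)) ^+ 2 <= (1 + expR (t * -2)) / 2)
  <-> a <= 3 / 2.
Proof.
split=> [bound | a_le].
  rewrite leNgt; apply/negP => a_gt.
  (* At [t = (2a - 3)/4] the first-order bounds [e^x >= 1 + x] already clash:
     with [b = 2a - 3 > 0] they force [1 + b^2/4 + b^3/4 <= 1]. *)
  pose t := (2 * a - 3) / 4; have t_ge0 : 0 <= t by rewrite /t; lra.
  have := bound t t_ge0; rewrite -expRM_natl => q2_le.
  have q2_ge : 1 + 2 * (t * (a - 2)) <= expR (2 * (t * (a - 2))) by exact: expR_ge1Dx.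
  have s_le : expR (t * -2) * (1 + 2 * t) <= 1.
    have e_ge : 1 + 2 * t <= expR (2 * t) by exact: expR_ge1Dx.
    have e_inv : expR (t * -2) * expR (2 * t) = 1.
      by rewrite -expRD (_ : t * -2 + 2 * t = 0) ?expR0 //; ring.
    have := expR_ge0 (t * -2); nra.
  have : (1 + 4 * (t * (a - 2))) * (1 + 2 * t) <= 1.
    have : 0 <= 1 + 2 * t by lra.
    nra.
  have : 0 < (2 * a - 3) * (a - 1) by apply: mulr_gt0; lra.
  rewrite /t; nra.
move=> t t_ge0.
have q2_le : expR (t * (a - 2)) ^+ 2 <= expR (- t).
  by rewrite -expRM_natl ler_expR; nra.
have e2 : expR (t * -2) = expR (- t) ^+ 2.
  by rewrite -expRM_natl; congr expR; ring.
(* AM-GM: [e^{-t} <= (1 + e^{-2t})/2]. *)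
rewrite e2; have := sqr_ge0 (expR (- t) - 1); nra.
Qed.

Theorem mainTheorem5 (R : realType) (a : R) :
  (forall t : R, 0 <= t -> unital_schwarz (expLa a t)) <-> a <= 3 / 2.
Proof.
rewrite -coherence_bound_iff.
have s_le1 (t : R) : 0 <= t -> (1 + expR (t * -2)) / 2 <= 1.
  move=> t_ge0; suff : expR (t * -2) <= 1 by lra.
  by rewrite expR_le1; nra.
split=> Schwarz t t_ge0.
  apply/(pcmap_unital_schwarz _ (s_le1 t t_ge0)).
  by rewrite -expLa_pcmap; exact: Schwarz.
rewrite expLa_pcmap; apply/(pcmap_unital_schwarz _ (s_le1 t t_ge0)).
exact: Schwarz.
Qed.
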